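(* Under Algorithm 2(b) below, the decoding event occurs at a given receiver in a given slot if, in that slot, either (a) the receiver has a successful reception which results in its virtual queue being empty; or (b) the receiver has a successful reception and the receiver was a leader at the beginning of the slot.
   Context: Model: a sender broadcasts packets $\mathbf{p}_1,\mathbf{p}_2,\dots$ (vectors over $\mathbb{F}_q$, $q\ge n$, indexed by arrival order) to $n$ receivers over a slotted packet erasure broadcast channel with perfect feedback; in each slot the sender transmits at most one linear combination of queued packets and each receiver either receives it or suffers an erasure. A node's knowledge space is the space of coefficient vectors of linear combinations it can compute; the virtual queue of receiver $j$ has size $\dim$(sender's knowledge space) $-\dim$(receiver $j$'s knowledge space). A node has seen $\mathbf{p}_k$ if it can compute $\mathbf{p}_k+\mathbf{q}$ where $\mathbf{q}$ involves only packets with index greater than $k$. If receiver $r$ has seen $\mathbf{p}_k$, its witness $\mathbf{W}_r(\mathbf{p}_k)$ is the unique linear combination known to $r$ of the form $\mathbf{p}_k+\mathbf{q}$ with $\mathbf{q}$ involving only packets of index greater than $k$ not seen by $r$. A receiver's next unseen packet is its lowest-index unseen packet. Algorithm 2(b): the sender drops a packet once all receivers have seen it. Coding module: let $u_1<\dots<u_m$ be the distinct indices of next unseen packets of receivers whose next unseen packet has arrived, and $R(u_i)$ the set of those receivers whose next unseen packet is $\mathbf{p}_{u_i}$; for $j=1,\dots,m$, with $\mathbf{y}_r=\sum_{i<j}\alpha_i\mathbf{W}_r(\mathbf{p}_{u_i})$ for $r\in R(u_j)$, pick $\alpha_j\in\mathbb{F}_q$ different from the coefficient of $\mathbf{p}_{u_j}$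 in every such $\mathbf{y}_r$; transmit $\sum_i\alpha_i\mathbf{p}_{u_i}$. The decoding event at a receiver is the event that all packets the receiver has seen become decoded by it. A leader is a receiver that has seen the maximum number of packets among all receivers at the given time (there may be several). *)

From HB Require Import structures.
From mathcomp Require Import all_boot all_order all_algebra.
Set Implicit Arguments. Unset Strict Implicit. Unset Printing Implicit Defensive.
Import GRing.Theory.
Local Open Scope ring_scope.

Section NC.
Variables (F : finFieldType) (N : nat).
(* Packets p_1,...,p_N are indexed (0-based, in arrival order) by 'I_N;
   a coefficient vector of a linear combination of packets is a row vector. *)
Local Notation vec := 'rV[F]_N.

Definition coef (v : vec) (k : 'I_N) : F := v ord0 k.
Definition unitvec (k : 'I_N) : vec := delta_mx ord0 k.

Definition sender_space (a : nat) : {vspace vec} :=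
  <<[seq unitvec k | k <- enum 'I_N & (nat_of_ord k < a)%N]>>%VS.

Definition seen (U : {vspace vec}) (k : 'I_N) : bool :=
  [exists v : vec, [&& v \in U, coef v k == 1 &
                       [forall i : 'I_N, (i < k)%N ==> (coef v i == 0)]]].

Definition decoded (U : {vspace vec}) (k : 'I_N) : bool := unitvec k \in U.

Definition is_witness (U : {vspace vec}) (k : 'I_N) (w : vec) : Prop :=
  [/\ w \in U, coef w k = 1,
      forall i : 'I_N, (i < k)%N -> coef w i = 0 &
      forall i : 'I_N, (k < i)%N -> seen U i -> coef w i = 0].

Definition next_unseen (U : {vspace vec}) (u : 'I_N) : bool :=
  ~~ seen U u && [forall i : 'I_N, (i < u)%N ==> seen U i].

Definition num_seen (U : {vspace vec}) : nat := #|[set k | seen U k]|.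

Definition decoding_event (U : {vspace vec}) : Prop :=
  forall k : 'I_N, seen U k -> decoded U k.

Definition leader (n : nat) (V : 'I_n -> {vspace vec}) (r : 'I_n) : Prop :=
  forall r' : 'I_n, (num_seen (V r') <= num_seen (V r))%N.

Definition Ucal (n : nat) (V : 'I_n -> {vspace vec}) (a : nat) (i : 'I_N) : bool :=
  [exists r : 'I_n, next_unseen (V r) i && (i < a)%N].

(* x = sum_j alpha_j p_{u_j} is a valid output of the coding module of
   Algorithm 2(b) given receivers' knowledge spaces V and a arrived packets:
   alpha_j = coef x u_j, and alpha_j differs from the coefficient of p_{u_j}
   in y_r = sum_{i<j} alpha_i W_r(p_{u_i}) for every r in R(u_j). *)
Definition alg2b_tx (n : nat) (V : 'I_n -> {vspace vec}) (a : nat) (x : vec) : Prop :=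
  (forall k : 'I_N, coef x k != 0 -> Ucal V a k) /\
  forall (r : 'I_n) (u : 'I_N), next_unseen (V r) u -> (u < a)%N ->
    forall w : 'I_N -> vec,
      (forall i : 'I_N, Ucal V a i -> (i < u)%N -> is_witness (V r) i (w i)) ->
      coef x u != coef (\sum_(i | Ucal V a i && (i < u)%N) coef x i *: w i) u.

End NC.

From HB Require Import structures.
From mathcomp Require Import all_boot all_order all_algebra.
Import GRing.Theory.
Local Open Scope ring_scope.

(* Inductively over the slots, every receiver r has seen exactly the packets 0, ..., s_r - 1, and its
   knowledge space has a reduced row-echelon basis with pivots 0, ..., s_r - 1;
   these basis rows are the witnesses.  The coding module only uses packets
   that have arrived and are the next unseen packet of some receiver, so
   arrived packets beyond every receiver's next unseen packet never get any
   weight in any basis.  Its choice of coefficients makes each reception a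
   Gauss-Jordan step that adds the next pivot.  After a reception, a leader's
   basis therefore vanishes right of its last pivot, i.e. consists of unit
   vectors, and all it has seen is decoded.  If instead the virtual queue
   becomes empty, the knowledge space is contained in the sender's space and
   has its dimension, so every seen packet is decoded there as well. *)

Lemma card_ord_lt {N s : nat} : (s <= N)%N -> #|[set k : 'I_N | (k < s)%N]| = s.
Proof.
move=> sN; have widen_inj : injective (widen_ord sN).
  by move=> i j eq_ij; apply: val_inj; exact: (congr1 val eq_ij).
rewrite -[RHS](card_ord s) -(card_imset _ widen_inj); apply: eq_card => k.
rewrite inE; apply/idP/imsetP => [ks|[i _ ->]]; last exact: (ltn_ord i).
by exists (Ordinal ks) => //; apply: val_inj.
Qed.

Lemma ord_ltn_eqF {N : nat} (i k : 'I_N) : (i < k)%N -> (i == k) = false.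
Proof. by move=> ik; rewrite -val_eqE ltn_eqF. Qed.

Section ReducedBasis.

Set Implicit Arguments.
Unset Strict Implicit.

Variables (F : finFieldType) (N : nat).
Local Notation vec := 'rV[F]_N.
Implicit Types (U : {vspace vec}) (M : 'M[F]_N) (v y : vec).

Definition zero_col M (j : 'I_N) : Prop := forall i, M i j = 0.

Definition reduced_basis U (s : nat) M : Prop :=
  [/\ forall i j : 'I_N, (s <= i)%N -> M i j = 0,
      forall i j : 'I_N, (i < s)%N -> (j < s)%N -> M i j = (i == j)%:R,
      forall i, row i M \in U &
      forall v, v \in U -> v *m M = v].

Lemma decoding_event_sender_space U (a : nat) :
  (forall v, v \in U -> forall j : 'I_N, (a <= j)%N -> v ord0 j = 0) ->
  \dim U = \dim (sender_space F N a) -> decoding_event U.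
Proof.
move=> supp dimU k /existsP [v /and3P [vU /eqP vk _]].
have unit_in (i : 'I_N) : (i < a)%N -> unitvec F i \in sender_space F N a.
  by move=> ia; apply/memv_span/mapP; exists i => //; rewrite mem_filter ia mem_enum.
have ka : (k < a)%N.
  rewrite ltnNge; apply/negP => ak.
  by move: vk; rewrite /coef supp // => /eqP; rewrite eq_sym oner_eq0.
have -> : U = sender_space F N a.
  apply/eqP; rewrite eqEdim dimU leqnn andbT; apply/subvP => w wU.
  rewrite (row_sum_delta w); apply: rpred_sum => j _.
  case: (ltnP j a) => ja; first exact/rpredZ/unit_in.
  by rewrite supp // scale0r mem0v.
exact: unit_in.
Qed.

(* One Gauss-Jordan step: [z = y - y M] is [y] reduced modulo the current
   basis, the new pivot row is [z / z_p], and column [p] is cleared from the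
   other rows. *)
Definition pivot_update M y (p : 'I_N) : 'M[F]_N :=
  let z := y - y *m M in
  M + (z ord0 p)^-1 *: (\col_i ((i == p)%:R - M i p) *m z).

Section PivotUpdate.

Variables (M : 'M[F]_N) (y : vec) (p : 'I_N).
Let z := y - y *m M.

Lemma pivot_updateE i j :
  pivot_update M y p i j = M i j + (z ord0 p)^-1 * (((i == p)%:R - M i p) * z ord0 j).
Proof. by rewrite !mxE big_ord1 !mxE. Qed.

Lemma mulmx_pivot_update v :
  v *m pivot_update M y p
    = v *m M + ((z ord0 p)^-1 * (v ord0 p - (v *m M) ord0 p)) *: z.
Proof.
rewrite mulmxDr -scalemxAr mulmxA.
have -> : v *m \col_i ((i == p)%:R - M i p) = (v ord0 p - (v *m M) ord0 p)%:M.
  apply/matrixP => i j; rewrite !ord1 !mxE eqxx mulr1n.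
  under eq_bigr do rewrite !mxE mulrBr.
  rewrite sumrB (bigD1 p) //= eqxx mulr1 big1 ?addr0 // => k kp.
  by rewrite (negbTE kp) mulr0.
by rewrite mul_scalar_mx scalerA.
Qed.

Lemma row_pivot_update i :
  row i (pivot_update M y p) = row i M + ((z ord0 p)^-1 * ((i == p)%:R - M i p)) *: z.
Proof. by apply/rowP => j; rewrite [LHS]mxE pivot_updateE !mxE mulrA. Qed.

End PivotUpdate.

Section Basis.

Variables (U : {vspace vec}) (s : nat) (M : 'M[F]_N).
Hypothesis basisM : reduced_basis U s M.

Lemma reduced_mulmx_lt v (j : 'I_N) : (j < s)%N -> (v *m M) ord0 j = v ord0 j.
Proof.
have [Mhi Mid _ _] := basisM; move=> js.
rewrite mxE (bigD1 j) //= Mid // eqxx mulr1 big1 ?addr0 // => k kj.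
by case: (ltnP k s) => ks; [rewrite Mid // (negbTE kj) mulr0 | rewrite Mhi // mulr0].
Qed.

Lemma reduced_zero_col v (j : 'I_N) : v \in U -> zero_col M j -> v ord0 j = 0.
Proof.
have [_ _ _ Mfix] := basisM; move=> vU Mj.
by rewrite -(Mfix v vU) mxE big1 // => i _; rewrite Mj mulr0.
Qed.

Lemma seen_reduced k : seen U k = (k < s)%N.
Proof.
have [Mhi Mid Mrow Mfix] := basisM.
apply/idP/idP => [/existsP [v /and3P [vU /eqP vk /forallP vlt]] | ks].
  rewrite ltnNge; apply/negP => sk; move: vk.
  rewrite /coef -(Mfix v vU) mxE big1 => [/eqP|i _]; first by rewrite eq_sym oner_eq0.
  case: (ltnP i k) => ik; last by rewrite Mhi ?mulr0 // (leq_trans sk ik).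
  by move: (vlt i); rewrite ik /coef => /eqP ->; rewrite mul0r.
apply/existsP; exists (row k M); apply/and3P.
split; [exact: Mrow | by rewrite /coef mxE Mid // eqxx |].
apply/forallP => i; apply/implyP => ik.
by rewrite /coef mxE Mid ?(ltn_trans ik) // (eq_sym k) ord_ltn_eqF.
Qed.

Lemma reduced_witness (i : 'I_N) : (i < s)%N -> is_witness U i (row i M).
Proof.
have [_ Mid Mrow _] := basisM; move=> is_.
split=> [|| j ji | j ij]; first exact: Mrow.
- by rewrite /coef mxE Mid // eqxx.
- by rewrite /coef mxE Mid ?(ltn_trans ji) // (eq_sym i) ord_ltn_eqF.
- by rewrite seen_reduced => js; rewrite /coef mxE Mid // ord_ltn_eqF.
Qed.

Lemma next_unseen_reduced u : next_unseen U u = (u == s :> nat).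
Proof.
rewrite /next_unseen seen_reduced -leqNgt; apply/andP/eqP => [[su /forallP lt_seen] | us].
  apply/eqP; rewrite eqn_leq su andbT leqNgt; apply/negP => us.
  have sN : (s < N)%N := ltn_trans us (ltn_ord u).
  by have := lt_seen (Ordinal sN); rewrite seen_reduced /= ltnn us.
by rewrite us leqnn; split=> //; apply/forallP => i; rewrite seen_reduced; apply/implyP.
Qed.

Lemma num_seen_reduced : (s <= N)%N -> num_seen U = s.
Proof.
by move=> sN; rewrite -[RHS](card_ord_lt sN); apply: eq_card => k; rewrite !inE seen_reduced.
Qed.

Lemma decoding_event_reduced :
  (forall j : 'I_N, (s <= j)%N -> zero_col M j) -> decoding_event U.
Proof.
have [_ Mid Mrow _] := basisM; move=> Mzero k; rewrite seen_reduced => ks.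
rewrite /decoded; suff -> : unitvec F k = row k M by exact: Mrow.
apply/rowP => j; rewrite !mxE eqxx /=.
case: (ltnP j s) => js; first by rewrite Mid // eq_sym.
rewrite Mzero //; suff /negbTE -> : j != k by [].
by apply: contraTneq js => ->; rewrite -ltnNge.
Qed.

Lemma reduced_basis_addv_span y :
  (forall j : 'I_N, (s <= j)%N -> zero_col M j /\ y ord0 j = 0) ->
  reduced_basis (U + <[y]>) s M.
Proof.
have [Mhi Mid Mrow Mfix] := basisM; move=> hi.
have yM : y *m M = y.
  apply/rowP => j; case: (ltnP j s) => js; first exact: reduced_mulmx_lt.
  have [Mj yj] := hi j js.
  by rewrite yj mxE big1 // => i _; rewrite Mj mulr0.
split=> // [i | v /memv_addP [u uU [w /vlineP [k ->] ->]]].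
  exact: subvP (addvSl U <[y]>) _ (Mrow i).
by rewrite mulmxDl -scalemxAl yM Mfix.
Qed.

Lemma reduced_basis_addv_pivot y (p : 'I_N) :
  p = s :> nat -> (y *m M) ord0 p != y ord0 p ->
  reduced_basis (U + <[y]>) s.+1 (pivot_update M y p) /\
  forall j, zero_col M j -> y ord0 j = 0 -> zero_col (pivot_update M y p) j.
Proof.
have [Mhi Mid Mrow Mfix] := basisM; move=> ps yMp.
set z := y - y *m M; set c := z ord0 p.
have zE (j : 'I_N) : z ord0 j = y ord0 j - (y *m M) ord0 j by rewrite !mxE.
have c0 : c != 0 by rewrite /c zE subr_eq0 eq_sym.
have z_lt (j : 'I_N) : (j < s)%N -> z ord0 j = 0 by move=> js; rewrite zE reduced_mulmx_lt ?subrr.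
have p_neq (i : 'I_N) : (i == p) = (i == s :> nat) by rewrite -ps.
have UsubUy : (U <= U + <[y]>)%VS := addvSl U <[y]>.
have yMU : y *m M \in U by rewrite mulmx_sum_row; apply/rpred_sum => k _; apply/rpredZ.
have zUy : z \in (U + <[y]>)%VS.
  by rewrite /z addrC memv_add ?rpredN ?memv_line.
have fixU u : u \in U -> u *m pivot_update M y p = u.
  by move=> uU; rewrite mulmx_pivot_update Mfix // subrr mulr0 scale0r addr0.
have fixy : y *m pivot_update M y p = y.
  by rewrite mulmx_pivot_update -/z -/c -zE mulVf // scale1r /z addrC subrK.
split; first split.
- move=> i j si; rewrite pivot_updateE !Mhi ?(ltnW si) // p_neq.
  by rewrite gtn_eqF // subrr mul0r mulr0 addr0.
- move=> i j si sj; rewrite pivot_updateE -/z -/c.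
  case: (ltnP j s) => js.
    rewrite (z_lt j js) !mulr0 addr0; case: (ltnP i s) => is_; first exact: Mid.
    have is_eq : i = s :> nat by apply/eqP; rewrite eqn_leq is_ -ltnS si.
    by rewrite Mhi ?is_eq // eq_sym ord_ltn_eqF ?is_eq.
  have -> : j = p by apply: val_inj => /=; apply/eqP; rewrite ps eqn_leq js -ltnS sj.
  by rewrite mulrCA mulVf // mulr1 addrC subrK.
- move=> i; rewrite row_pivot_update.
  by apply: rpredD; [exact: subvP UsubUy _ (Mrow i) | exact: rpredZ].
- move=> v /memv_addP [u uU [w /vlineP [k ->] ->]].
  by rewrite mulmxDl -scalemxAl fixy fixU.
- move=> j Mj yj i.
  have yMj : (y *m M) ord0 j = 0 by rewrite mxE big1 // => k _; rewrite Mj mulr0.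
  by rewrite pivot_updateE Mj -/z (zE j) yj yMj subrr !mulr0 addr0.
Qed.

End Basis.

End ReducedBasis.

Section Protocol.

Set Implicit Arguments.
Unset Strict Implicit.

Variables (F : finFieldType) (N n : nat).
Local Notation vec := 'rV[F]_N.
Implicit Types (V : 'I_n -> {vspace vec}) (s : 'I_n -> nat) (M : 'I_n -> 'M[F]_N).

(* Columns the coding module never touches: packets that have not arrived,
   or that lie beyond the next unseen packet of every receiver. *)
Definition untouched_col (A : nat) s (j : 'I_N) : bool :=
  (A <= j)%N || [forall r, (s r < j)%N].

Definition coding_inv V (A : nat) s M : Prop :=
  forall r, [/\ (s r <= A)%N, reduced_basis (V r) (s r) (M r) &
                forall j, untouched_col A s j -> zero_col (M r) j].

Section Step.

Variables (V : 'I_n -> {vspace vec}) (A : nat) (s : 'I_n -> nat) (M : 'I_n -> 'M[F]_N).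
Variable y : vec.
Hypotheses (AN : (A <= N)%N) (invM : coding_inv V A s M) (tx : alg2b_tx V A y).

Lemma alg2b_tx_supp (k : 'I_N) : ~~ Ucal V A k -> y ord0 k = 0.
Proof. by case: tx => supp _; apply: contraNeq; apply: supp. Qed.

Lemma alg2b_tx_untouched (j : 'I_N) : untouched_col A s j -> y ord0 j = 0.
Proof.
move=> hj; apply: alg2b_tx_supp; apply: contraL hj => /existsP [r /andP [nu jA]].
rewrite negb_or -ltnNge jA /=; apply/forallPn; exists r.
have [_ basis _] := invM r.
by move: nu; rewrite (next_unseen_reduced basis) => /eqP ->; rewrite ltnn.
Qed.

Lemma alg2b_tx_pivot r (p : 'I_N) :
  p = s r :> nat -> (s r < A)%N -> (y *m M r) ord0 p != y ord0 p.
Proof.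
move=> ps srA; have [_ basis _] := invM r; have [Mhi _ _ _] := basis.
have nu : next_unseen (V r) p by rewrite (next_unseen_reduced basis) ps.
have wit i : Ucal V A i -> (i < s r)%N -> is_witness (V r) i (row i (M r)).
  by move=> _; apply: reduced_witness.
case: tx => _ /(_ r p nu); rewrite ps => /(_ srA _ wit).
suff -> : \sum_(i | Ucal V A i && (i < s r)%N) coef y i *: row i (M r) = y *m M r.
  by rewrite eq_sym.
rewrite mulmx_sum_row big_mkcond /=; apply: eq_bigr => i _.
case: ifP => // /negbT; rewrite negb_and -leqNgt => /orP [/alg2b_tx_supp yi | pi].
  by rewrite /coef yi scale0r.
have -> : row i (M r) = 0 by apply/rowP => j; rewrite !mxE Mhi.
by rewrite scaler0.
Qed.

Lemma coding_inv_step_receiver r (b : bool) :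
  exists M1 : 'M[F]_N,
    reduced_basis (if b then (V r + <[y]>)%VS else V r)
                  (if b && (s r < A)%N then (s r).+1 else s r) M1 /\
    forall j, untouched_col A s j -> zero_col M1 j.
Proof.
have [_ basis Mzero] := invM r.
case: b => /=; last by exists (M r).
case: ltnP => [srA | Asr].
  have srN : (s r < N)%N := leq_trans srA AN.
  have yMp := alg2b_tx_pivot (p := Ordinal srN) erefl srA.
  have [basis1 zero1] := reduced_basis_addv_pivot basis (p := Ordinal srN) erefl yMp.
  exists (pivot_update (M r) y (Ordinal srN)); split=> // j hj.
  exact: zero1 (Mzero j hj) (alg2b_tx_untouched hj).
exists (M r); split=> //; apply: (reduced_basis_addv_span basis) => j srj.
have hj : untouched_col A s j by rewrite /untouched_col (leq_trans Asr srj).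
by split; [exact: Mzero | exact: alg2b_tx_untouched].
Qed.

Lemma coding_inv_step (A1 : nat) (rc : 'I_n -> bool) (V1 : 'I_n -> {vspace vec}) :
  (A <= A1)%N -> (forall r, V1 r = if rc r then (V r + <[y]>)%VS else V r) ->
  exists M1, coding_inv V1 A1 (fun r => if rc r && (s r < A)%N then (s r).+1 else s r) M1
             /\ forall r j, untouched_col A s j -> zero_col (M1 r) j.
Proof.
move=> AA1 V1E.
have [M1 hM1] := fin_all_exists (fun r => coding_inv_step_receiver r (rc r)).
exists M1; split=> r; last by case: (hM1 r).
have [sA _ _] := invM r; have [basis1 zero1] := hM1 r.
have s_le r' : (s r' <= if rc r' && (s r' < A)%N then (s r').+1 else s r')%N.
  by case: ifP.
split.
- by case: ifP => [/andP [_ srA] | _]; apply: leq_trans AA1.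
- by rewrite V1E.
- move=> j /orP [A1j | /forallP lt_j]; apply: zero1; apply/orP.
  + by left; exact: leq_trans AA1 A1j.
  + by right; apply/forallP => r'; exact: leq_ltn_trans (s_le r') (lt_j r').
Qed.

End Step.

Lemma coding_inv_reachable (a : nat -> nat) (x : nat -> vec) (rcv : nat -> 'I_n -> bool)
    (V : 'I_n -> nat -> {vspace vec}) :
  (forall t, a t <= a t.+1)%N -> (forall t, a t <= N)%N ->
  (forall r, V r 0%N = 0%VS) ->
  (forall r t, V r t.+1 = if rcv t r then (V r t + <[x t]>)%VS else V r t) ->
  (forall t, alg2b_tx (fun r => V r t) (a t) (x t)) ->
  forall t, exists s M, coding_inv (fun r => V r t) (a t) s M.
Proof.
move=> ha haN hV0 hVS halg; elim=> [|t [s [M inv]]].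
  exists (fun _ => 0%N), (fun _ => 0) => r; split=> // [|j _ i]; last by rewrite mxE.
  split=> [i j _ | i j | i | v]; rewrite ?mxE //; first by rewrite row0 hV0 mem0v.
  by rewrite hV0 memv0 => /eqP ->; rewrite mul0mx.
have [M1 [inv1 _]] := coding_inv_step (haN t) inv (halg t) (ha t) (fun r => hVS r t).
by exists (fun r => if rcv t r && (s r < a t)%N then (s r).+1 else s r), M1.
Qed.

End Protocol.

Theorem theorem10 (F : finFieldType) (n N : nat)
  (a : nat -> nat) (x : nat -> 'rV[F]_N) (rcv : nat -> 'I_n -> bool)
  (V : 'I_n -> nat -> {vspace 'rV[F]_N}) :
  (n <= #|F|)%N ->
  (forall t, a t <= a t.+1)%N ->
  (forall t, a t <= N)%N ->
  (forall r, V r 0%N = 0%VS) ->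
  (forall r t, V r t.+1 = if rcv t r then (V r t + <[x t]>)%VS else V r t) ->
  (forall t, alg2b_tx (fun r => V r t) (a t) (x t)) ->
  forall (t : nat) (r : 'I_n),
    rcv t r ->
    (\dim (V r t.+1) = \dim (@sender_space F N (a t)) \/ leader (fun r' => V r' t) r) ->
    decoding_event (V r t.+1).
Proof.
(* The bound on the field size only ensures that the coding module can pick
   its coefficients; that choice is already given by [alg2b_tx]. *)
move=> _ ha haN hV0 hVS halg t r hr hcase.
have [s [M inv]] := coding_inv_reachable ha haN hV0 hVS halg t.
have [M1 [inv1 zero1]] := coding_inv_step (haN t) inv (halg t) (ha t) (fun r => hVS r t).
have [_ basis1 _] := inv1 r.
case: hcase => [full | lead].
  apply: decoding_event_sender_space full => v vV j aj.
  by apply: (reduced_zero_col basis1 vV); apply: zero1; rewrite /untouched_col aj.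
have s_le r' : (s r' <= s r)%N.
  have [sr'a basis' _] := inv r'; have [sra basis _] := inv r.
  move: (lead r'); rewrite (num_seen_reduced basis') ?(num_seen_reduced basis) //.
  + exact: leq_trans sra (haN t).
  + exact: leq_trans sr'a (haN t).
apply: (decoding_event_reduced basis1) => j srj; apply: zero1; apply/orP.
move: srj; rewrite hr /=; case: ltnP => [sra srj | asr srj].
  by right; apply/forallP => r'; exact: leq_ltn_trans (s_le r') srj.
by left; exact: leq_trans asr srj.
Qed.
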